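(* Let $\Gamma$ be a rationally metrised graph containing a connected subgraph $C$ and two distinct vertices $w_0,w_1$ of $C$ such that for every vertex $w$ of $C$ other than $w_0,w_1$, every edge or half-edge of $\Gamma$ incident to $w$ lies in $C$. Let $\Gamma'$ be obtained from $\Gamma$ by replacing $C$ by a single edge $e_C$ from $w_0$ to $w_1$ (and its inverse) of length $\ell(e_C)=\langle w_1-w_0,w_1-w_0\rangle_C$, and let $\rho$ be the map on rational vertices which is the identity outside $C$ and sends a rational vertex $v$ of $C$ to the point at distance $\langle v-w_0,w_1-w_0\rangle_C$ along $e_C$. After subdividing $\Gamma$ and $\Gamma'$ so that $\rho$ is induced by a graph morphism (each edge of $\Gamma$ mapping either to a vertex or onto an edge of $\Gamma'$), for every edge $e'$ of $\Gamma'$ we have \[\frac1{\ell(e')}=\sum_{\rho(e)=e'}\frac1{\ell(e)}.\]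
   Context: Rationally metrised graph: finite sets of vertices, oriented edges, half-edges, source map, fixed-point-free involution $e\mapsto e^{-1}$ on edges, connected, lengths $\ell(e)=\ell(e^{-1})\in\mathbb Q_{>0}$. Rational vertices are points at rational distance along edges/half-edges. $\langle\cdot,\cdot\rangle_C$ is the height pairing on divisors of total mass $0$ on $C$: $\langle\mathbf u,\mathbf v\rangle_C={}^t\mathbf uL_C^{-1}\mathbf v$ where $L_C$ is the Laplacian matrix of $C$ ($L_{uu}=\sum_{s(e)=u\ne t(e)}1/\ell(e)$, $L_{uv}=-\sum_{s(e)=u,t(e)=v}1/\ell(e)$), extended to rational vertices by subdivision; one has $0\le\langle v-w_0,w_1-w_0\rangle_C\le\ell(e_C)$, so $\rho$ is well defined. *)

From HB Require Import structures.
From mathcomp Require Import all_boot all_order all_algebra.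
From Stdlib Require Import ClassicalEpsilon.
Set Implicit Arguments. Unset Strict Implicit. Unset Printing Implicit Defensive.
Import Order.TTheory GRing.Theory Num.Theory.
Local Open Scope ring_scope.

(** Divisors on a vertex type: [delta a] is the point mass at [a]. *)
Definition delta {T : eqType} (a : T) : T -> rat := fun x => if x == a then 1 else 0.
Definition ddiff {T : eqType} (a b : T) : T -> rat := fun x => delta a x - delta b x.

(** A graph given by its list of ORIENTED edges (source, target, length)
    (every edge appears together with its inverse).  [lapl es f] is L f,
    where L_uu = sum_{s(e)=u<>t(e)} 1/l(e), L_uv = - sum_{s(e)=u,t(e)=v} 1/l(e). *)
Definition lapl {T : finType} (es : seq (T * T * rat)) (f : T -> rat) (u : T) : rat :=
  \sum_(x <- es | (x.1.1 == u) && (x.1.2 != u)) (f u - f x.1.2) / x.2.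

(** Height pairing <D1, D2> = tD1 L^{-1} D2 (D1, D2 of mass 0):
    the value sum_u D1(u) f(u) for f with L f = D2. *)
Definition height_pairing {T : finType} (es : seq (T * T * rat)) (D1 D2 : T -> rat) : rat :=
  epsilon (inhabits 0) (fun r => exists f : T -> rat,
     (forall u, lapl es f u = D2 u) /\ \sum_(u : T) D1 u * f u = r).

Definition pieces (cuts : seq rat) (L : rat) : seq (rat * rat) :=
  let p := sort (fun x y : rat => x <= y) (undup [:: 0, L & cuts]) in zip p (behead p).

Definition plen {T : Type} (p : T * rat * rat) : rat := p.2 - p.1.2.

Section Graph.
(** Graph: vertices V, oriented edges E, half-edges H, source map [src],
    involution [inv] (e |-> e^{-1}), half-edge source [hsrc], lengths [len]. *)
Variables (V E H : finType) (src : E -> V) (inv : E -> E) (hsrc : H -> V)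
  (len : E -> rat).

Definition tgt (e : E) : V := src (inv e).

Definition is_rmgraph : Prop :=
  [/\ involutive inv, forall e, inv e != e,
      forall e, len (inv e) = len e, forall e, 0 < len e
    & forall u v : V, connect [rel x y | [exists e, (src e == x) && (tgt e == y)]] u v].

Definition is_subgraph (VC : {set V}) (EC : {set E}) (HC : {set H}) : Prop :=
  [/\ forall e, e \in EC -> inv e \in EC,
      forall e, e \in EC -> src e \in VC
    & forall h, h \in HC -> hsrc h \in VC].

Definition sub_connected (VC : {set V}) (EC : {set E}) : Prop :=
  forall u v, u \in VC -> v \in VC ->
    connect [rel x y | [exists e, [&& e \in EC, src e == x & tgt e == y]]] u v.

Definition Cedges (EC : {set E}) : seq (V * V * rat) :=
  [seq (src e, tgt e, len e) | e <- enum EC].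

(** oriented edge list of C subdivided at the point at distance t along e0
    (new vertex = None) *)
Definition Cedges_sub (EC : {set E}) (e0 : E) (t : rat) : seq (option V * option V * rat) :=
  flatten [seq (if e == e0 then
                  [:: (Some (src e), None, t); (None, Some (tgt e), len e - t)]
                else if e == inv e0 then
                  [:: (Some (src e), None, len e - t); (None, Some (tgt e), t)]
                else [:: (Some (src e), Some (tgt e), len e)]) | e <- enum EC].

Definition eC_len (EC : {set E}) (w0 w1 : V) : rat :=
  height_pairing (Cedges EC) (ddiff w1 w0) (ddiff w1 w0).

(** rho of the rational vertex of C at distance t (0 <= t <= len e) along e in EC:
    the distance <v - w0, w1 - w0>_C along e_C (computed after subdivision). *)
Definition rho_pt (EC : {set E}) (w0 w1 : V) (e : E) (t : rat) : rat :=
  if t == 0 then height_pairing (Cedges EC) (ddiff (src e) w0) (ddiff w1 w0)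
  else if t == len e then height_pairing (Cedges EC) (ddiff (tgt e) w0) (ddiff w1 w0)
  else height_pairing (Cedges_sub EC e t) (ddiff None (Some w0)) (ddiff (Some w1) (Some w0)).

(** Edges of Gamma': inl e for e not in C, inr true = e_C, inr false = e_C^{-1}. *)
Definition edges' (EC : {set E}) : seq (E + bool) :=
  [seq inl e | e <- enum (~: EC)] ++ [:: inr true; inr false].

Definition len' (EC : {set E}) (w0 w1 : V) (x : E + bool) : rat :=
  match x with inl e => len e | inr _ => eC_len EC w0 w1 end.

(** A subdivision of Gamma: rational cut points strictly inside each edge,
    compatible with inversion. *)
Definition valid_cuts (cut : E -> seq rat) : Prop :=
  forall e, (forall t, t \in cut e -> 0 < t < len e) /\
            cut (inv e) =i [seq len e - t | t <- cut e].

Definition valid_cuts' (EC : {set E}) (w0 w1 : V) (cut' : E + bool -> seq rat) : Prop :=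
  [/\ forall e, e \notin EC ->
        (forall t, t \in cut' (inl e) -> 0 < t < len e) /\
        cut' (inl (inv e)) =i [seq len e - t | t <- cut' (inl e)],
      forall b t, t \in cut' (inr b) -> 0 < t < eC_len EC w0 w1
    & cut' (inr false) =i [seq eC_len EC w0 w1 - t | t <- cut' (inr true)]].

(** Oriented edges of the subdivided Gamma: (e, a, b) = part of e from a to b. *)
Definition sub_edges (cut : E -> seq rat) : seq (E * rat * rat) :=
  flatten [seq [seq (e, ab.1, ab.2) | ab <- pieces (cut e) (len e)] | e <- enum E].

Definition sub_edges' (EC : {set E}) (w0 w1 : V) (cut' : E + bool -> seq rat)
  : seq ((E + bool) * rat * rat) :=
  flatten [seq [seq (x, ab.1, ab.2) | ab <- pieces (cut' x) (len' EC w0 w1 x)] | x <- edges' EC].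

(** The image under rho of a subdivided edge: None if it is sent to a vertex,
    Some e' if it is sent onto the edge e' of subdivided Gamma'. *)
Definition rho_edge (EC : {set E}) (w0 w1 : V) (p : E * rat * rat)
  : option ((E + bool) * rat * rat) :=
  let: (e, a, b) := p in
  if e \in EC then
    let ra := rho_pt EC w0 w1 e a in
    let rb := rho_pt EC w0 w1 e b in
    if ra == rb then None
    else if ra < rb then Some (inr true, ra, rb)
    else Some (inr false, eC_len EC w0 w1 - ra, eC_len EC w0 w1 - rb)
  else Some (inl e, a, b).

Definition rho_is_morphism (EC : {set E}) (w0 w1 : V) (cut : E -> seq rat)
  (cut' : E + bool -> seq rat) : Prop :=
  forall p, p \in sub_edges cut ->
    match rho_edge EC w0 w1 p with
    | Some q => q \in sub_edges' EC w0 w1 cut'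
    | None => rho_pt EC w0 w1 p.1.1 p.1.2 \in
                [:: 0, eC_len EC w0 w1 & cut' (inr true)]
    end.

End Graph.

From Pilot Require Import Defs.
From mathcomp Require Import all_boot all_order all_algebra.
From mathcomp Require Import ring lra.
From Stdlib Require Import ClassicalEpsilon.
Set Implicit Arguments. Unset Strict Implicit. Unset Printing Implicit Defensive.
Import Order.TTheory GRing.Theory Num.Theory.
Local Open Scope ring_scope.

(* Let [f] be the potential of the unit current from [w0] to [w1] in [C], i.e. [L f = w1 - w0]
   and [f w0 = 0].  Subdividing an edge does not change the potential, so
   [<v - w0, w1 - w0>_C = f v] at every rational vertex [v]: the map rho is the linear
   interpolation of [f] along the edges of [C], and [l(e_C) = f w1].  Outside [C], rho is the
   identity and the two subdivisions coincide.  For a piece [[a', b']] of [e_C], Green's identity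
   tested against [clamp_[a',b'] o f] gives
     sum over edges with [f] increasing of [df * d(clamp o f) / l] = [b' - a'];
   since rho is a morphism, each piece of [Gamma] on which [f] increases either maps onto
   [[a', b']], contributing [(b' - a')^2 / l(piece)], or has its image outside [(a', b')],
   contributing [0].
   The inverse edge is handled in the same way with the potential [f w1 - f]. *)

Lemma sum_mul_delta (T : finType) (f : T -> rat) y : \sum_w f w * delta w y = f y.
Proof.
rewrite (bigD1 y) //= /delta eqxx mulr1 big1 ?addr0 // => w /negbTE.
by rewrite eq_sym => ->; rewrite mulr0.
Qed.

Lemma sum_ddiff_mul (T : finType) (a b : T) (h : T -> rat) :
  \sum_u ddiff a b u * h u = h a - h b.
Proof.
rewrite /ddiff; under eq_bigr do rewrite mulrBl; rewrite sumrB.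
by congr (_ - _); rewrite -[RHS](sum_mul_delta h); apply: eq_bigr => u _;
  rewrite /delta mulrC; case: eqP => [->|]; case: eqP => // ->.
Qed.

Section Network.
Variables (T : finType) (es : seq (T * T * rat)).

Definition rev_edge (x : T * T * rat) : T * T * rat := (x.1.2, x.1.1, x.2).

Definition symmetric_edges : Prop :=
  forall F : T * T * rat -> rat, \sum_(x <- es) F x = \sum_(x <- es) F (rev_edge x).

Definition positive_lengths : Prop := forall x, x \in es -> 0 < x.2.

Definition orthogonal_to_ker (D : T -> rat) : Prop :=
  forall h : T -> rat, (forall x, x \in es -> h x.1.1 = h x.1.2) -> \sum_u D u * h u = 0.

Lemma laplB (f g : T -> rat) u :
  lapl es (fun v => f v - g v) u = lapl es f u - lapl es g u.
Proof. by rewrite /lapl -sumrB; apply: eq_bigr => x _; rewrite -mulrBl; congr (_ * _); ring. Qed.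

Lemma lapl_affine (f g : T -> rat) a c :
  (forall v, g v = a * f v + c) -> forall u, lapl es g u = a * lapl es f u.
Proof.
move=> gE u; rewrite /lapl mulr_sumr; apply: eq_bigr => x _.
by rewrite !gE mulrA; congr (_ * _); ring.
Qed.

Lemma lapl_delta_expansion (f : T -> rat) u :
  lapl es f u = \sum_w f w * lapl es (delta w) u.
Proof.
rewrite /lapl; under [RHS]eq_bigr do rewrite big_distrr /=.
rewrite exchange_big /=; apply: eq_bigr => x _.
under eq_bigr do rewrite mulrA mulrBr.
by rewrite -mulr_suml sumrB !sum_mul_delta.
Qed.

Lemma sum_mul_lapl (F G : T -> rat) :
  \sum_u G u * lapl es F u = \sum_(x <- es) G x.1.1 * ((F x.1.1 - F x.1.2) / x.2).
Proof.
rewrite /lapl; under eq_bigr do rewrite big_distrr /= big_mkcond /=.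
rewrite exchange_big /=; apply: eq_bigr => x _.
rewrite (bigD1 x.1.1) //= eqxx /= big1 ?addr0; last first.
  by move=> u /negbTE Hu; rewrite eq_sym Hu.
by case: eqP => [->|//]; rewrite subrr mul0r mulr0.
Qed.

Hypothesis es_sym : symmetric_edges.

Lemma green_identity (F G : T -> rat) :
  (\sum_u G u * lapl es F u) *+ 2
  = \sum_(x <- es) (F x.1.2 - F x.1.1) * (G x.1.2 - G x.1.1) / x.2.
Proof.
rewrite sum_mul_lapl mulr2n {2}es_sym -big_split /=.
by apply: eq_bigr => x _; rewrite /rev_edge /=; ring.
Qed.

(* Each unoriented edge along which [F] varies is counted once, hence no factor 2. *)
Lemma green_identity_increasing (F G : T -> rat) :
  \sum_(x <- es | F x.1.1 < F x.1.2) (F x.1.2 - F x.1.1) * (G x.1.2 - G x.1.1) / x.2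
  = \sum_u G u * lapl es F u.
Proof.
set w := fun x : T * T * rat => (F x.1.2 - F x.1.1) * (G x.1.2 - G x.1.1) / x.2.
have decr_incr : \sum_(x <- es | F x.1.2 < F x.1.1) w x = \sum_(x <- es | F x.1.1 < F x.1.2) w x.
  by rewrite big_mkcond es_sym [RHS]big_mkcond; apply: eq_bigr => x _;
    rewrite /w /rev_edge /=; case: ifP => // _; ring.
have split3 : \sum_(x <- es) w x
    = \sum_(x <- es | F x.1.1 < F x.1.2) w x + \sum_(x <- es | F x.1.2 < F x.1.1) w x.
  rewrite !(big_mkcond (fun x => _ < _)) -big_split /=; apply: eq_bigr => x _; rewrite /w.
  by case: ltgtP => [| |->]; rewrite ?addr0 ?add0r // subrr !mul0r.
apply: (@mulIf _ 2%:R) => //; rewrite !mulr_natr green_identity -/w split3 decr_incr.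
by rewrite mulr2n.
Qed.

Hypothesis es_pos : positive_lengths.

Lemma lapl_energy0_const (h : T -> rat) :
  \sum_u h u * lapl es h u = 0 -> forall x, x \in es -> h x.1.1 = h x.1.2.
Proof.
move=> energy0 x xes.
have ix : (index x es < size es)%N by rewrite index_mem.
have := green_identity h h; rewrite energy0 mul0rn (big_nth x) big_mkord => /esym sum0.
have : (h x.1.2 - h x.1.1) * (h x.1.2 - h x.1.1) / x.2 = 0.
  rewrite -[x](nth_index x xes); apply: (psumr_eq0P _ sum0 (i := Ordinal ix)) => // i _.
  by apply: divr_ge0; [rewrite -expr2 sqr_ge0 | exact/ltW/es_pos/mem_nth].
move/eqP; rewrite mulf_eq0 invr_eq0 (gt_eqF (es_pos xes)) orbF mulf_eq0 orbb subr_eq0.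
by move/eqP.
Qed.

(* Fredholm alternative: a column [h] of the cokernel of the Laplacian matrix has zero energy,
   hence is constant along edges, hence orthogonal to [D]. *)
Lemma lapl_solvable (D : T -> rat) : orthogonal_to_ker D ->
  exists f : T -> rat, forall u, lapl es f u = D u.
Proof.
move=> D_orth.
pose M : 'M[rat]_#|T| := \matrix_(i, j) lapl es (delta (enum_val i)) (enum_val j).
pose d : 'rV[rat]_#|T| := \row_j D (enum_val j).
have sum_enum (F : T -> rat) : \sum_(i < #|T|) F (enum_val i) = \sum_w F w.
  by rewrite (reindex (@enum_rank T)) /=; [apply: eq_bigr => w _; rewrite enum_rankK |
    exists enum_val => x _; rewrite ?enum_rankK ?enum_valK].
have lapl_M (g : T -> rat) u : lapl es g u = \sum_k g (enum_val k) * M k (enum_rank u).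
  by rewrite lapl_delta_expansion -sum_enum; apply: eq_bigr => k _; rewrite mxE enum_rankK.
have d_in_M : (d <= M)%MS.
  rewrite submxE; apply/eqP/matrixP => i j; rewrite !mxE.
  pose h w := cokermx M (enum_rank w) j.
  have Mh : forall k, \sum_l M k l * h (enum_val l) = 0.
    move=> k; have := congr1 (fun A : 'M[rat]_#|T| => A k j) (mulmx_coker M).
    rewrite [X in X = _ -> _]mxE [X in _ = X -> _]mxE => Mcoker.
    by rewrite -[RHS]Mcoker; apply: eq_bigr => l _; rewrite /h enum_valK.
  have energy0 : \sum_u h u * lapl es h u = 0.
    under eq_bigr do rewrite lapl_M big_distrr /=.
    rewrite exchange_big /=; apply: big1 => k _.
    rewrite -sum_enum; transitivity (h (enum_val k) * \sum_l M k l * h (enum_val l)).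
      by rewrite big_distrr; apply: eq_bigr => l _; rewrite enum_valK /=; ring.
    by rewrite Mh mulr0.
  rewrite -[RHS](D_orth h (lapl_energy0_const energy0)) -sum_enum.
  by apply: eq_bigr => k _; rewrite /d mxE /h enum_valK.
have [X dX] := submxP d_in_M.
exists (fun w => X 0 (enum_rank w)) => u; rewrite lapl_M.
have := congr1 (fun A : 'rV[rat]_#|T| => A 0 (enum_rank u)) dX.
rewrite !mxE enum_rankK => ->; apply: eq_bigr => k _; by rewrite enum_valK.
Qed.

Lemma height_pairingE (D1 D2 f : T -> rat) :
  (forall u, lapl es f u = D2 u) -> orthogonal_to_ker D1 ->
  height_pairing es D1 D2 = \sum_u D1 u * f u.
Proof.
move=> Lf D1_orth; rewrite /height_pairing.
set P := fun r => _.
have [g [Lg <-]] : P (epsilon (inhabits 0) P).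
  by apply: epsilon_spec; exists (\sum_u D1 u * f u), f.
have energy0 : \sum_u (g u - f u) * lapl es (fun v => g v - f v) u = 0.
  by apply: big1 => u _; rewrite laplB Lg Lf subrr mulr0.
have /eqP := D1_orth _ (lapl_energy0_const energy0).
by under eq_bigr do rewrite mulrBr; rewrite sumrB subr_eq0 => /eqP.
Qed.

End Network.

Lemma mem_zip (S T : eqType) (s : seq S) (t : seq T) a b :
  (a, b) \in zip s t -> a \in s /\ b \in t.
Proof.
elim: s t => [|x s IH] [|y t] //=; rewrite inE => /orP [/eqP [-> ->]|/IH [a_s b_t]].
  by split; apply: mem_head.
by rewrite !inE a_s b_t !orbT.
Qed.

Lemma telescope_consecutive (T : Type) (U : zmodType) (h : T -> U) x r :
  \sum_(ab <- zip (x :: r) r) (h ab.2 - h ab.1) = h (last x r) - h x.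
Proof.
elim: r x => [|y r IH] x /=; first by rewrite big_nil subrr.
by rewrite big_cons IH /= addrC addrA subrK.
Qed.

Section ConsecutivePoints.
Context {disp : Order.disp_t} {T : orderType disp}.
Local Open Scope order_scope.

Lemma consecutive_cover (x z : T) r : x <= z -> z <= last x r ->
  z \in x :: r \/ exists2 ab, ab \in zip (x :: r) r & ab.1 < z < ab.2.
Proof.
elim: r x => [|y r IH] x /= xz zl; first by left; rewrite inE eq_le xz zl.
case: (ltP z y) => zy.
  have [->|zx] := eqVneq z x; first by left; rewrite mem_head.
  by right; exists (x, y); rewrite ?mem_head //= zy lt_neqAle eq_sym zx xz.
case: (IH y zy zl) => [zr|[ab abr ab_z]]; first by left; rewrite inE zr orbT.
by right; exists ab; rewrite ?inE ?abr ?orbT.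
Qed.

Variables (x : T) (r : seq T).
Hypothesis r_sorted : path <%O x r.

Lemma path_le_last z : z \in x :: r -> z <= last x r.
Proof.
elim: r x r_sorted z => [|y r' IH] x' /= => [_ z|/andP [xy pth] z]; first by rewrite inE => /eqP ->.
rewrite inE => /orP [/eqP ->|/(IH _ pth) //].
exact: le_trans (ltW xy) (IH _ pth _ (mem_head _ _)).
Qed.

Lemma consecutive_lt a b : (a, b) \in zip (x :: r) r -> a < b.
Proof.
elim: r x r_sorted => [|y r' IH] x' //= /andP [xy pth].
by rewrite inE => /orP [/eqP [-> ->] //|/(IH _ pth)].
Qed.

Lemma consecutive_gap a b z : (a, b) \in zip (x :: r) r -> z \in x :: r -> (z <= a) || (b <= z).
Proof.
elim: r x r_sorted => [|y r' IH] x' //= /andP [xy pth].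
have y_min w : w \in r' -> y < w by move/(allP (order_path_min lt_trans pth)).
rewrite inE => /orP [/eqP [-> ->]|ab_r'].
  rewrite !inE => /orP [/eqP ->|/orP [/eqP ->|/y_min/ltW ->]]; by rewrite ?lexx ?orbT.
rewrite inE => /orP [/eqP ->|]; last exact: IH.
have [/=] := mem_zip ab_r'; rewrite inE => /orP [/eqP ->|/y_min ya] _; first by rewrite ltW.
by rewrite ltW // (lt_trans xy ya).
Qed.

Lemma consecutive_uniq : uniq (zip (x :: r) r).
Proof.
elim: r x r_sorted => [|y r' IH] x' //= /andP [xy pth]; rewrite IH // andbT.
apply/negP => /mem_zip [] /[swap] _; rewrite inE => /orP [/eqP xy_eq|x'_r'].
  by move: xy; rewrite xy_eq ltxx.
by have := allP (order_path_min lt_trans pth) _ x'_r'; rewrite ltNge ltW.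
Qed.

End ConsecutivePoints.

Section Pieces.
Variables (cuts : seq rat) (L : rat).

Definition cut_points : seq rat := sort <=%R (undup [:: 0, L & cuts]).

Lemma piecesE : pieces cuts L = zip cut_points (behead cut_points).
Proof. by []. Qed.

Lemma cut_points_sorted : sorted <%R cut_points.
Proof. by rewrite lt_sorted_uniq_le sort_uniq undup_uniq sort_sorted //; exact: le_total. Qed.

Lemma mem_cut_points z : (z \in cut_points) = (z \in [:: 0, L & cuts]).
Proof. by rewrite mem_sort mem_undup. Qed.

Lemma pieces_lt a b : (a, b) \in pieces cuts L -> a < b.
Proof.
by rewrite piecesE; move: cut_points_sorted; case: cut_points => //= x r pth;
  exact: (consecutive_lt pth).
Qed.

Lemma pieces_gap a b z : (a, b) \in pieces cuts L -> z \in cut_points -> (z <= a) || (b <= z).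
Proof.
by rewrite piecesE; move: cut_points_sorted; case: cut_points => //= x r pth;
  exact: (consecutive_gap pth).
Qed.

Lemma pieces_uniq : uniq (pieces cuts L).
Proof.
by rewrite piecesE; move: cut_points_sorted; case: cut_points => //= x r pth;
  exact: (consecutive_uniq pth).
Qed.

Lemma pieces_mem a b : (a, b) \in pieces cuts L -> a \in cut_points /\ b \in cut_points.
Proof.
rewrite piecesE => /mem_zip [-> b_r]; split => //.
by move: b_r; case: cut_points => //= x r b_r; rewrite inE b_r orbT.
Qed.

Hypothesis cuts_inner : {in cuts, forall t, 0 < t < L}.

Lemma cut_points_bound z : 0 <= L -> z \in cut_points -> 0 <= z <= L.
Proof.
move=> L_ge0; rewrite mem_cut_points !inE => /orP [/eqP ->|/orP [/eqP ->|/cuts_inner]].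
- by rewrite lexx.
- by rewrite lexx L_ge0.
- by case/andP => ? ?; rewrite !ltW.
Qed.

Hypothesis L_gt0 : 0 < L.

Lemma cut_points_shape :
  exists2 r, cut_points = 0 :: r & last 0 r = L /\ path <%R 0 r.
Proof.
have bound := cut_points_bound (ltW L_gt0).
have zero_in : 0 \in cut_points by rewrite mem_cut_points mem_head.
have L_in : L \in cut_points by rewrite mem_cut_points !inE eqxx orbT.
move: cut_points_sorted bound zero_in L_in; case: cut_points => [|x r] //= pth bound.
rewrite inE => /orP [/eqP x0|zero_r]; last first.
  have := allP (order_path_min lt_trans pth) _ zero_r.
  by have /andP [x_ge0 _] := bound x (mem_head _ _); rewrite ltNge x_ge0.
subst x => L_r; exists r => //; split => //.
apply/eqP; rewrite eq_le path_le_last // andbT.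
by have /andP [] := bound _ (mem_last 0 r).
Qed.

Lemma cut_point_endpoint z : z \in cut_points ->
  exists a b, (a, b) \in pieces cuts L /\ (z = a \/ z = b).
Proof.
have [[|y r] cpE [lastL _]]:= cut_points_shape; first by move: L_gt0; rewrite -lastL ltxx.
rewrite piecesE cpE inE => /orP [/eqP ->|z_r].
  by exists 0, y; rewrite mem_head; split => //; left.
have : z \in unzip2 (zip (0 :: y :: r) (y :: r)) by rewrite unzip2_zip //= ltnW.
by case/mapP => [[a b] ab_in /= ->]; exists a, b; split => //; right.
Qed.

End Pieces.

Lemma pieces_eq (cuts cuts' : seq rat) L : 0 < L ->
  {in cuts, forall t, 0 < t < L} -> {in cuts', forall t, 0 < t < L} ->
  (forall a b, (a, b) \in pieces cuts L -> (a, b) \in pieces cuts' L) ->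
  pieces cuts' L = pieces cuts L.
Proof.
move=> L_gt0 cuts_in cuts'_in sub.
suff cp_eq : cut_points cuts' L = cut_points cuts L by rewrite !piecesE cp_eq.
apply: lt_sorted_eq; rewrite ?cut_points_sorted // => z; apply/idP/idP => z_in.
  have [r cpE [lastL pth]] := cut_points_shape cuts_in L_gt0.
  have /andP [z_ge0 z_le] := cut_points_bound cuts'_in (ltW L_gt0) z_in.
  rewrite -lastL in z_le; have [|[[a b] ab_in /andP [az zb]]] := consecutive_cover z_ge0 z_le.
    by rewrite cpE.
  have ab_in' : (a, b) \in pieces cuts' L by apply: sub; rewrite piecesE cpE.
  by have := pieces_gap ab_in' z_in; rewrite !leNgt az zb.
have [a [b [ab_in [->|->]]]] := cut_point_endpoint cuts_in L_gt0 z_in.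
  by have [] := pieces_mem (sub _ _ ab_in).
by have [] := pieces_mem (sub _ _ ab_in).
Qed.

Lemma mem_cut_points_flip (cuts cuts' : seq rat) L t :
  cuts' =i [seq L - s | s <- cuts] -> (t \in cut_points cuts L) = (L - t \in cut_points cuts' L).
Proof.
move=> cuts'E; rewrite !mem_cut_points !inE cuts'E.
rewrite (mem_map (f := fun s => L - s)); last by move=> ? ? /addrI /oppr_inj.
have -> : (L - t == 0) = (t == L) by rewrite subr_eq0 eq_sym.
have -> : (L - t == L) = (t == 0) by rewrite -subr_eq0 addrAC subrr add0r oppr_eq0.
by rewrite orbCA.
Qed.

Definition clamp (a' b' y : rat) : rat := if y <= a' then a' else if b' <= y then b' else y.

Lemma clamp_step a' b' u v : a' < b' -> u < v ->
  (u <= a') || (b' <= u) -> (v <= a') || (b' <= v) -> (u <= a' -> b' <= v -> u = a' /\ v = b') ->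
  clamp a' b' v - clamp a' b' u = if (u == a') && (v == b') then b' - a' else 0.
Proof.
move=> ab uv u_out v_out onto; rewrite /clamp.
case: (lerP u a') => ua; case: (lerP v a') => va /=.
- by rewrite subrr (lt_eqF (le_lt_trans va ab)) andbF.
- have vb : b' <= v by move: v_out; rewrite leNgt va.
  by have [-> ->] := onto ua vb; rewrite lexx !eqxx.
- by move: (le_lt_trans va ua); rewrite ltNge ltW.
- have ub : b' <= u by move: u_out; rewrite leNgt ua.
  by rewrite ub (le_trans ub (ltW uv)) subrr gt_eqF.
Qed.

Section BandSegment.
Variables (cuts : seq rat) (L y0 y1 a' b' : rat) (phi : rat -> rat).
Hypotheses (L_gt0 : 0 < L) (cuts_inner : {in cuts, forall t, 0 < t < L}) (ab' : a' < b').
Hypothesis phiE : forall t, phi t = y0 + t * (y1 - y0) / L.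
Hypothesis phi_gap : {in cut_points cuts L, forall z, (phi z <= a') || (b' <= phi z)}.
Hypothesis phi_onto : forall a b, (a, b) \in pieces cuts L ->
  phi a < phi b -> phi a <= a' -> b' <= phi b -> phi a = a' /\ phi b = b'.

Let phiB a b : phi b - phi a = (b - a) * ((y1 - y0) / L).
Proof. by rewrite !phiE; field; rewrite gt_eqF. Qed.

(* The pieces mapped onto [a', b'] are exactly those across which the clamped values of
    [phi] increase, by [b' - a'] each; hence the sum telescopes. *)
Lemma band_sum_segment :
  \sum_(ab <- pieces cuts L | (phi ab.1 == a') && (phi ab.2 == b')) 1 / (ab.2 - ab.1)
  = if y0 < y1 then (y1 - y0) * (clamp a' b' y1 - clamp a' b' y0) / L / (b' - a') ^+ 2 else 0.
Proof.
have ab'_neq0 : b' - a' != 0 by rewrite subr_eq0 gt_eqF.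
case: ifP => y01; last first.
  rewrite big_seq_cond big1 // => -[a b] /andP [ab_in /andP [/eqP phi_a /eqP phi_b]].
  have : b' - a' <= 0.
    rewrite -phi_a -phi_b phiB pmulr_rle0 ?subr_gt0 ?(pieces_lt ab_in) //.
    by rewrite ler_pdivrMr // mul0r subr_le0 leNgt y01.
  by rewrite subr_le0 leNgt ab'.
have [r cpE [lastL pth]] := cut_points_shape cuts_inner L_gt0.
have slope_gt0 : 0 < (y1 - y0) / L by rewrite divr_gt0 // subr_gt0.
transitivity (\sum_(ab <- zip (0 :: r) r)
   (y1 - y0) / L / (b' - a') ^+ 2 * (clamp a' b' (phi ab.2) - clamp a' b' (phi ab.1))); last first.
  rewrite -big_distrr /= (telescope_consecutive (fun y => clamp a' b' (phi y))) lastL !phiE.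
  have -> : y0 + L * (y1 - y0) / L = y1 by field; rewrite gt_eqF.
  by rewrite !mul0r addr0; field; rewrite ab'_neq0 gt_eqF.
rewrite piecesE cpE big_mkcond big_seq [RHS]big_seq; apply: eq_bigr => -[a b] /= ab_in.
have ab_in' : (a, b) \in pieces cuts L by rewrite piecesE cpE.
have ab_lt := pieces_lt ab_in'.
have [a_in b_in] := mem_zip ab_in.
have phi_lt : phi a < phi b by rewrite -subr_gt0 phiB mulr_gt0 // subr_gt0.
rewrite clamp_step ?phi_gap ?cpE ?inE ?b_in ?orbT //; last exact: phi_onto.
case: ifP => [/andP [/eqP phi_a /eqP phi_b]|_]; last by rewrite mulr0.
have := phiB a b; rewrite phi_a phi_b => ->.
by field; rewrite !gt_eqF ?subr_gt0.
Qed.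

End BandSegment.

Lemma mem_sub_edges (E : finType) (len : E -> rat) (cut : E -> seq rat) e a b :
  ((e, a, b) \in sub_edges len cut) = ((a, b) \in pieces (cut e) (len e)).
Proof.
apply/flatten_mapP/idP => [[e1 _ /mapP [[a1 b1] ab_in [-> -> ->]]] //|ab_in].
by exists e; rewrite ?mem_enum //; apply/mapP; exists (a, b).
Qed.

Lemma sum_sub_edges_pred1 (E : finType) (len : E -> rat) (cut : E -> seq rat)
    (F : E * rat * rat -> rat) e a b :
  (a, b) \in pieces (cut e) (len e) ->
  \sum_(p <- sub_edges len cut | p == (e, a, b)) F p = F (e, a, b).
Proof.
move=> ab_in; rewrite /sub_edges big_flatten /= big_map big_enum /= (bigD1 e) //=.
rewrite [X in _ + X]big1 ?addr0 => [|e1 e1_neq]; last first.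
  by rewrite big_map big_pred0 // => ab; rewrite !xpair_eqE (negbTE e1_neq).
rewrite big_map big_mkcond (bigD1_seq (a, b)) ?pieces_uniq //= eqxx big1 ?addr0 // => -[a1 b1].
by rewrite !xpair_eqE eqxx /= => /negbTE ->.
Qed.

Lemma mem_sub_edges' (V E : finType) (src : E -> V) (inv : E -> E) (len : E -> rat)
    (EC : {set E}) w0 w1 (cut' : E + bool -> seq rat) x a b :
  (x, a, b) \in sub_edges' src inv len EC w0 w1 cut' ->
  x \in edges' EC /\ (a, b) \in pieces (cut' x) (len' src inv len EC w0 w1 x).
Proof. by case/flatten_mapP => x1 x1_in /mapP [[a1 b1] ab_in [-> -> ->]]. Qed.

Lemma mem_edges'_inl (E : finType) (EC : {set E}) e : inl e \in edges' EC -> e \notin EC.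
Proof.
by rewrite mem_cat => /orP [/mapP [e1 e1_in [->]]|//]; rewrite mem_enum inE in e1_in.
Qed.

Section Graph.
Variables (V E : finType) (src : E -> V) (inv : E -> E) (len : E -> rat).
Hypotheses (inv_invol : involutive inv) (inv_neq : forall e, inv e != e)
  (len_inv : forall e, len (inv e) = len e) (len_gt0 : forall e, 0 < len e).
Variables (VC : {set V}) (EC : {set E}).
Hypotheses (EC_inv : forall e, e \in EC -> inv e \in EC)
  (EC_src : forall e, e \in EC -> src e \in VC) (C_conn : sub_connected src inv VC EC).

Local Notation tgt := (tgt src inv).
Local Notation Cedges := (Cedges src inv len EC).

Lemma tgt_inv e : tgt (inv e) = src e.
Proof. by rewrite /tgt inv_invol. Qed.

Lemma big_enum_inv (G : E -> rat) : \sum_(e <- enum EC) G (inv e) = \sum_(e <- enum EC) G e.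
Proof.
rewrite !big_enum /= [RHS](reindex_inj (inv_inj inv_invol)) /=.
by apply: eq_bigl => e; apply/idP/idP => [/EC_inv|/EC_inv]; rewrite ?inv_invol.
Qed.

Lemma Cedges_symmetric : symmetric_edges Cedges.
Proof.
move=> F; rewrite /Cedges !big_map -(big_enum_inv (fun e => F (src e, tgt e, len e))).
by apply: eq_bigr => e _; rewrite /rev_edge /= tgt_inv len_inv.
Qed.

Lemma Cedges_positive : positive_lengths Cedges.
Proof. by move=> x /mapP [e _ ->] /=. Qed.

Lemma sub_connected_const (h : V -> rat) :
  (forall e, e \in EC -> h (src e) = h (tgt e)) -> {in VC &, forall u v, h u = h v}.
Proof.
move=> h_edge u v uC vC; move: (C_conn uC vC) => /connectP [p pth ->] {v vC}.
elim: p u pth {uC} => [|y p IH] u //= /andP [/existsP [e /and3P [eC /eqP <- /eqP <-]] pth].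
by rewrite -(IH _ pth) h_edge.
Qed.

Lemma ddiff_orthogonal a b : a \in VC -> b \in VC -> orthogonal_to_ker Cedges (ddiff a b).
Proof.
move=> aC bC h h_edge; apply/eqP; rewrite sum_ddiff_mul subr_eq0; apply/eqP.
apply: (sub_connected_const _ aC bC) => e eC; apply: (h_edge (src e, tgt e, len e)).
by apply: map_f; rewrite mem_enum.
Qed.

Definition interp (g : V -> rat) (e : E) (t : rat) : rat :=
  g (src e) + t * (g (tgt e) - g (src e)) / len e.

Section Band.
Variables (cut : E -> seq rat) (F : V -> rat) (x0 x1 : V) (a' b' : rat).
Hypotheses (cut_inner : forall e, {in cut e, forall t, 0 < t < len e})
  (LF : forall u, lapl Cedges F u = ddiff x1 x0 u)
  (F_x0 : F x0 <= a') (F_x1 : b' <= F x1) (ab' : a' < b').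
Hypothesis F_gap : forall e, e \in EC ->
  {in cut_points (cut e) (len e), forall z, (interp F e z <= a') || (b' <= interp F e z)}.
Hypothesis F_onto : forall e a b, e \in EC -> (a, b) \in pieces (cut e) (len e) ->
  interp F e a < interp F e b -> interp F e a <= a' -> b' <= interp F e b ->
  interp F e a = a' /\ interp F e b = b'.

(* Green's identity against the clamped potential: the unit current from [x0] to [x1]
    crosses the band [a' < F < b'] exactly through the pieces mapped onto [a', b']. *)
Lemma band_sum :
  \sum_(p <- sub_edges len cut | [&& p.1.1 \in EC, interp F p.1.1 p.1.2 == a'
                                                  & interp F p.1.1 p.2 == b']) 1 / plen p
  = 1 / (b' - a').
Proof.
pose G u := clamp a' b' (F u).
rewrite /sub_edges big_flatten /= big_map.
transitivity (\sum_(e <- enum EC) (if F (src e) < F (tgt e) then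
     (F (tgt e) - F (src e)) * (G (tgt e) - G (src e)) / len e / (b' - a') ^+ 2 else 0)).
  rewrite big_enum [RHS]big_enum [RHS]big_mkcond /=; apply: eq_bigr => e _.
  rewrite big_map /=; case: ifP => eC; last by rewrite big1.
  by rewrite -(band_sum_segment (phi := interp F e) (len_gt0 e) (@cut_inner e) ab') //;
    [exact: F_gap | move=> a b; exact: F_onto].
transitivity ((\sum_(x <- Cedges | F x.1.1 < F x.1.2)
   (F x.1.2 - F x.1.1) * (G x.1.2 - G x.1.1) / x.2) / (b' - a') ^+ 2).
  rewrite /Defs.Cedges big_map [in RHS]big_mkcond mulr_suml; apply: eq_bigr => e _ /=.
  by case: ifP => _; rewrite ?mul0r.
rewrite green_identity_increasing; last exact: Cedges_symmetric.
under eq_bigr do rewrite LF mulrC.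
rewrite sum_ddiff_mul /G /clamp F_x0 (le_trans F_x1) ?lexx //.
rewrite leNgt (lt_le_trans ab' F_x1) /=.
by field; rewrite subr_eq0 gt_eqF.
Qed.

End Band.

Variables (w0 w1 : V).
Hypotheses (w0_C : w0 \in VC) (w1_C : w1 \in VC).

Lemma Cpotential_exists :
  exists f : V -> rat, (forall u, lapl Cedges f u = ddiff w1 w0 u) /\ f w0 = 0.
Proof.
have [f Lf] := lapl_solvable Cedges_symmetric Cedges_positive (ddiff_orthogonal w1_C w0_C).
exists (fun v => f v - f w0); split; last by rewrite subrr.
by move=> u; rewrite (@lapl_affine _ _ f _ 1 (- f w0)) ?mul1r // => v; rewrite mul1r.
Qed.

Variable f : V -> rat.
Hypotheses (Lf : forall u, lapl Cedges f u = ddiff w1 w0 u) (f_w0 : f w0 = 0).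

Lemma height_pairing_vertex v : v \in VC ->
  height_pairing Cedges (ddiff v w0) (ddiff w1 w0) = f v.
Proof.
move=> vC; rewrite (height_pairingE Cedges_symmetric Cedges_positive Lf).
  by rewrite sum_ddiff_mul f_w0 subr0.
exact: ddiff_orthogonal.
Qed.

Lemma eC_lenE : eC_len src inv len EC w0 w1 = f w1.
Proof. exact: height_pairing_vertex. Qed.

(* [f w1] is the energy of the unit current from [w0] to [w1]. *)
Lemma potential_w1_ge0 : 0 <= f w1.
Proof.
have := green_identity_increasing Cedges_symmetric f f.
under [RHS]eq_bigr do rewrite Lf mulrC.
rewrite sum_ddiff_mul f_w0 subr0 => <-.
rewrite big_seq_cond; apply: sumr_ge0 => x /andP [xC _].
by apply: divr_ge0; [rewrite -expr2 sqr_ge0 | exact/ltW/Cedges_positive].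
Qed.

Section Subdivision.
Variables (e0 : E) (t : rat).
Hypotheses (e0_C : e0 \in EC) (t_gt0 : 0 < t) (t_lt : t < len e0).

Local Notation Csub := (Cedges_sub src inv len EC e0 t).

Definition sub_block (e : E) : seq (option V * option V * rat) :=
  if e == e0 then [:: (Some (src e), None, t); (None, Some (tgt e), len e - t)]
  else if e == inv e0 then [:: (Some (src e), None, len e - t); (None, Some (tgt e), t)]
  else [:: (Some (src e), Some (tgt e), len e)].

Lemma Cedges_subE : Csub = flatten [seq sub_block e | e <- enum EC].
Proof. by []. Qed.

Let inv_e0_neq : (inv e0 == e0) = false.
Proof. exact/negbTE. Qed.

Lemma sub_block_inv e : map (@rev_edge _) (sub_block (inv e)) = rev (sub_block e).
Proof.
rewrite /sub_block.
case: (eqVneq e e0) => [->|ne0]; first by rewrite inv_e0_neq eqxx /rev_edge /= tgt_inv len_inv.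
case: (eqVneq e (inv e0)) => [->|ne1].
  by rewrite inv_invol eqxx /rev_edge /= tgt_inv len_inv.
rewrite (inj_eq (inv_inj inv_invol)) (negbTE ne0) -[e0 in inv e == e0]inv_invol.
by rewrite (inj_eq (inv_inj inv_invol)) (negbTE ne1) /rev_edge /= tgt_inv len_inv.
Qed.

Lemma Cedges_sub_symmetric : symmetric_edges Csub.
Proof.
move=> F; rewrite Cedges_subE !big_flatten /= !big_map -[RHS]big_enum_inv.
by apply: eq_bigr => e _; rewrite -[RHS](big_map _ xpredT) sub_block_inv big_rev.
Qed.

Lemma Cedges_sub_positive : positive_lengths Csub.
Proof.
move=> x; rewrite Cedges_subE => /flatten_mapP [e _]; rewrite /sub_block.
case: ifP => [/eqP ->|_]; first by rewrite !inE => /orP [] /eqP -> /=; rewrite ?subr_gt0.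
case: ifP => [/eqP ->|_]; last by rewrite inE => /eqP ->; apply: len_gt0.
by rewrite !inE len_inv => /orP [] /eqP -> /=; rewrite ?subr_gt0.
Qed.

Definition sub_potential (g : V -> rat) (o : option V) : rat :=
  if o is Some v then g v else interp g e0 t.

Let len_e0_neq0 : len e0 != 0. Proof. by rewrite gt_eqF. Qed.
Let t_neq0 : t != 0. Proof. by rewrite gt_eqF. Qed.
Let len_sub_t_neq0 : len e0 - t != 0. Proof. by rewrite gt_eqF // subr_gt0. Qed.

Lemma lapl_sub_block_Some (g : V -> rat) v e :
  \sum_(x <- sub_block e | (x.1.1 == Some v) && (x.1.2 != Some v))
     (sub_potential g (Some v) - sub_potential g x.1.2) / x.2
  = if (src e == v) && (tgt e != v) then (g v - g (tgt e)) / len e else 0.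
Proof.
rewrite /sub_block /sub_potential /interp.
case: (eqVneq e e0) => [->|ne0].
  rewrite !big_cons big_nil /= (inj_eq (@Some_inj _)) andbT addr0.
  case: (eqVneq (src e0) v) => [<-|//] /=.
  case: (eqVneq (tgt e0) (src e0)) => [->|_] /=.
    by rewrite subrr mulr0 mul0r addr0 subrr mul0r.
  by field; rewrite t_neq0 len_e0_neq0.
case: (eqVneq e (inv e0)) => [->|_]; last first.
  by rewrite !big_cons big_nil /= !(inj_eq (@Some_inj _)) addr0.
rewrite !big_cons big_nil /= (inj_eq (@Some_inj _)) andbT addr0 len_inv tgt_inv.
case: (eqVneq (src (inv e0)) v) => [<-|//] /=.
case: (eqVneq (src e0) (src (inv e0))) => [src_eq|_] /=.
  by rewrite /tgt -src_eq subrr mulr0 mul0r addr0 subrr mul0r.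
by rewrite /tgt; field; rewrite len_sub_t_neq0 len_e0_neq0.
Qed.

Lemma lapl_sub_potential_Some (g : V -> rat) v :
  lapl Csub (sub_potential g) (Some v) = lapl Cedges g v.
Proof.
rewrite /lapl Cedges_subE big_flatten /= big_map /Defs.Cedges big_map [RHS]big_mkcond.
by apply: eq_bigr => e _; rewrite lapl_sub_block_Some.
Qed.

Lemma lapl_sub_potential_None (g : V -> rat) : lapl Csub (sub_potential g) None = 0.
Proof.
rewrite /lapl Cedges_subE big_flatten /= big_map.
set A := (interp g e0 t - g (tgt e0)) / (len e0 - t).
set B := (interp g e0 t - g (src e0)) / t.
transitivity (\sum_(e <- enum EC) (if e == e0 then A else if e == inv e0 then B else 0)).
  apply: eq_bigr => e _; rewrite /sub_block.
  case: (eqVneq e e0) => [->|_]; first by rewrite !big_cons big_nil /= addr0.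
  case: (eqVneq e (inv e0)) => [->|_]; last by rewrite big_cons big_nil.
  by rewrite !big_cons big_nil /= addr0 tgt_inv.
rewrite big_enum /= (bigD1 e0) //= (bigD1 (inv e0)) /=; last by rewrite EC_inv ?inv_neq.
rewrite eqxx inv_e0_neq eqxx big1 ?addr0; last first.
  by move=> e /andP [/andP [_ /negbTE ->] /negbTE ->].
by rewrite /A /B /interp; field; rewrite t_neq0 len_e0_neq0 len_sub_t_neq0.
Qed.

Lemma sub_block_chain (h : option V -> rat) e :
  (forall x, x \in sub_block e -> h x.1.1 = h x.1.2) -> h (Some (src e)) = h (Some (tgt e)).
Proof.
rewrite /sub_block; case: ifP => _; [|case: ifP => _] => h_edge;
  rewrite (h_edge _ (mem_head _ _)) //.
  by rewrite (h_edge (None, Some (tgt e), len e - t)) // !inE eqxx orbT.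
by rewrite (h_edge (None, Some (tgt e), t)) // !inE eqxx orbT.
Qed.

Lemma height_pairing_interior :
  height_pairing Csub (ddiff None (Some w0)) (ddiff (Some w1) (Some w0)) = interp f e0 t.
Proof.
rewrite (height_pairingE Cedges_sub_symmetric Cedges_sub_positive (f := sub_potential f)).
- by rewrite sum_ddiff_mul /= f_w0 subr0.
- by case=> [v|]; rewrite ?lapl_sub_potential_Some ?Lf ?lapl_sub_potential_None.
move=> h h_edge; apply/eqP; rewrite sum_ddiff_mul subr_eq0; apply/eqP.
have block_edge e x : e \in EC -> x \in sub_block e -> h x.1.1 = h x.1.2.
  move=> eC xe; apply: h_edge; rewrite Cedges_subE.
  by apply/flatten_mapP; exists e; rewrite ?mem_enum.
rewrite -(block_edge e0 (Some (src e0), None, t)) ?e0_C /sub_block ?eqxx ?mem_head //=.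
apply: (sub_connected_const (h := fun v => h (Some v))); rewrite ?EC_src //.
by move=> e eC; apply: sub_block_chain => x; apply: block_edge.
Qed.

End Subdivision.

Lemma rho_ptE e t : e \in EC -> 0 <= t <= len e -> rho_pt src inv len EC w0 w1 e t = interp f e t.
Proof.
move=> eC /andP [t_ge0 t_le]; rewrite /rho_pt /interp.
have [->|t_neq0] := eqVneq t 0; first by rewrite height_pairing_vertex ?EC_src // !mul0r addr0.
have [->|t_neqL] := eqVneq t (len e).
  by rewrite height_pairing_vertex ?EC_src ?EC_inv //; field; rewrite gt_eqF.
apply: height_pairing_interior => //.
  by rewrite lt_neqAle eq_sym t_neq0.
by rewrite lt_neqAle t_neqL.
Qed.

Section Morphism.
Variables (cut : E -> seq rat) (cut' : E + bool -> seq rat).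
Hypotheses (cut_valid : valid_cuts inv len cut) (cut'_valid : valid_cuts' src inv len EC w0 w1 cut')
  (rho_morph : rho_is_morphism src inv len EC w0 w1 cut cut').

Local Notation rho_edge := (rho_edge src inv len EC w0 w1).
Local Notation sub_edges' := (sub_edges' src inv len EC w0 w1 cut').

Let cut_inner e : {in cut e, forall t, 0 < t < len e}.
Proof. by move=> t /(cut_valid e).1. Qed.

Let piece_bound e a b : (a, b) \in pieces (cut e) (len e) -> 0 <= a <= len e /\ 0 <= b <= len e.
Proof.
by case/pieces_mem => a_in b_in; split; apply: (cut_points_bound (@cut_inner e) (ltW (len_gt0 e))).
Qed.

(* [potential_dir false] is the potential of the unit current from [w1] to [w0]; it measures
   the distance along [e_C^-1]. *)
Definition potential_dir (bb : bool) (v : V) : rat := if bb then f v else f w1 - f v.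

Lemma interp_potential_dir bb e t :
  interp (potential_dir bb) e t = if bb then interp f e t else f w1 - interp f e t.
Proof. by case: bb => //; rewrite /interp /potential_dir; ring. Qed.

Lemma lapl_potential_dir bb u :
  lapl Cedges (potential_dir bb) u = ddiff (if bb then w1 else w0) (if bb then w0 else w1) u.
Proof.
case: bb; first exact: Lf.
rewrite (@lapl_affine _ _ f _ (-1) (f w1)) => [|v]; last by rewrite mulN1r addrC.
by rewrite Lf mulN1r /ddiff opprB.
Qed.

Lemma rho_edge_C e a b : e \in EC -> (a, b) \in pieces (cut e) (len e) ->
  rho_edge (e, a, b) =
    if interp f e a == interp f e b then None
    else let bb := interp f e a < interp f e b in
         Some (inr bb, interp (potential_dir bb) e a, interp (potential_dir bb) e b).
Proof.
move=> eC /piece_bound [a_bd b_bd].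
rewrite /Defs.rho_edge eC !rho_ptE // eC_lenE; case: eqP => // _.
by case: ifP => _; rewrite !interp_potential_dir.
Qed.

Lemma rho_edge_C_lt bb e a b : e \in EC -> (a, b) \in pieces (cut e) (len e) ->
  interp (potential_dir bb) e a < interp (potential_dir bb) e b ->
  rho_edge (e, a, b) = Some (inr bb, interp (potential_dir bb) e a, interp (potential_dir bb) e b).
Proof.
move=> eC ab_in; rewrite rho_edge_C // !interp_potential_dir.
case: bb => [lt_ab|]; first by rewrite (lt_eqF lt_ab) /= lt_ab.
rewrite ltrD2l ltrN2 => lt_ba.
by rewrite (gt_eqF lt_ba) /= ltNge (ltW lt_ba) /= !interp_potential_dir.
Qed.

Lemma rho_edge_C_eq bb e a b a' b' : a' < b' -> e \in EC -> (a, b) \in pieces (cut e) (len e) ->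
  (rho_edge (e, a, b) == Some (inr bb, a', b'))
  = (interp (potential_dir bb) e a == a') && (interp (potential_dir bb) e b == b').
Proof.
move=> ab' eC ab_in; rewrite rho_edge_C // !interp_potential_dir.
set ra := interp f e a; set rb := interp f e b.
have no_match c d : d < c -> (c == a') && (d == b') = false.
  by move=> dc; apply/negbTE/negP => /andP [/eqP ca /eqP db]; move: ab'; rewrite -ca -db ltNge ltW.
have [lt_ab|lt_ba|r_eq] := ltgtP ra rb; rewrite /= ?(lt_eqF lt_ab) ?(gt_eqF lt_ba) /=.
- rewrite !interp_potential_dir (inj_eq (@Some_inj _)) !xpair_eqE.
  by case: bb; rewrite // ?no_match // ltrD2l ltrN2.
- rewrite !interp_potential_dir (inj_eq (@Some_inj _)) !xpair_eqE.
  by case: bb; rewrite // no_match.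
- rewrite r_eq; apply/esym/negbTE/negP => /andP [/eqP ra_a /eqP rb_b].
  by move: ab'; rewrite -ra_a -rb_b ltxx.
Qed.

Lemma mem_cut_points_eC bb y :
  (y \in cut_points (cut' (inr true)) (f w1))
  = ((if bb then y else f w1 - y) \in cut_points (cut' (inr bb)) (f w1)).
Proof.
case: bb => //; apply: mem_cut_points_flip.
by case: cut'_valid => _ _; rewrite eC_lenE.
Qed.

Lemma interp_on_grid e z : e \in EC -> z \in cut_points (cut e) (len e) ->
  interp f e z \in cut_points (cut' (inr true)) (f w1).
Proof.
move=> eC /(cut_point_endpoint (@cut_inner e) (len_gt0 e)) [a [b [ab_in z_ab]]].
have := @rho_morph (e, a, b); rewrite mem_sub_edges => /(_ ab_in).
have [a_bd _] := piece_bound ab_in.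
rewrite rho_edge_C //; case: eqP => [ra_rb|_ /mem_sub_edges' [_ /pieces_mem]].
  rewrite /= rho_ptE // eC_lenE -mem_cut_points => a_in.
  by case: z_ab => ->; rewrite -?ra_rb.
rewrite /= eC_lenE !interp_potential_dir -!mem_cut_points_eC.
by case: z_ab => -> [].
Qed.

Lemma flux_outside_C e a' b' : e \notin EC -> (a', b') \in pieces (cut' (inl e)) (len e) ->
  1 / (b' - a') = \sum_(p <- sub_edges len cut | rho_edge p == Some (inl e, a', b')) 1 / plen p.
Proof.
move=> eNC; case: cut'_valid => /(_ e eNC) [cut'_inner _] _ _.
rewrite (pieces_eq (len_gt0 e) (@cut_inner e) cut'_inner) => [ab'_in|a b ab_in]; last first.
  have := @rho_morph (e, a, b); rewrite mem_sub_edges /Defs.rho_edge (negbTE eNC).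
  by move=> /(_ ab_in) /mem_sub_edges' [].
rewrite (eq_bigl (pred1 (e, a', b'))) ?sum_sub_edges_pred1 // => -[[e1 a] b] /=.
rewrite /Defs.rho_edge; case: ifP => [e1C|_]; last by rewrite !xpair_eqE.
rewrite !xpair_eqE (_ : (e1 == e) = false); last by apply: contraNF eNC => /eqP <-.
move: (rho_pt src inv len EC w0 w1 e1 a) (rho_pt src inv len EC w0 w1 e1 b) => ra rb.
by case: (ra == rb); case: (ra < rb).
Qed.

Lemma flux_eC bb a' b' :
  (a', b') \in pieces (cut' (inr bb)) (eC_len src inv len EC w0 w1) ->
  1 / (b' - a') = \sum_(p <- sub_edges len cut | rho_edge p == Some (inr bb, a', b')) 1 / plen p.
Proof.
rewrite eC_lenE => ab'_in; have ab' := pieces_lt ab'_in.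
have [a'_in b'_in] := pieces_mem ab'_in.
have cut'_inner : {in cut' (inr bb), forall t, 0 < t < f w1}.
  by case: cut'_valid => _ + _ => /(_ bb); rewrite eC_lenE.
have /andP [a'_ge0 _] := cut_points_bound cut'_inner potential_w1_ge0 a'_in.
have /andP [_ b'_le] := cut_points_bound cut'_inner potential_w1_ge0 b'_in.
have F_x0 : potential_dir bb (if bb then w0 else w1) <= a'.
  by case: (bb); rewrite /potential_dir ?f_w0 ?subrr.
have F_x1 : b' <= potential_dir bb (if bb then w1 else w0).
  by case: (bb); rewrite /potential_dir ?f_w0 ?subr0.
rewrite -(band_sum cut_inner (lapl_potential_dir bb) F_x0 F_x1 ab').
- symmetry; rewrite [LHS]big_seq_cond [RHS]big_seq_cond; apply: eq_bigl => -[[e a] b].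
  have [ab_in|] := boolP ((e, a, b) \in sub_edges len cut); last by rewrite !andFb.
  rewrite !andTb mem_sub_edges in ab_in *.
  have [eC|eNC] := boolP (e \in EC); first by rewrite rho_edge_C_eq //= eC.
  by rewrite /Defs.rho_edge (negbTE eNC).
- move=> e eC z z_in; apply: (pieces_gap ab'_in).
  by rewrite interp_potential_dir -mem_cut_points_eC interp_on_grid.
move=> e a b eC ab_in lt_ab a_le b_ge.
have := @rho_morph (e, a, b); rewrite mem_sub_edges (rho_edge_C_lt eC ab_in lt_ab) => /(_ ab_in).
case/mem_sub_edges' => _; rewrite /= eC_lenE => image_in.
have := pieces_gap image_in a'_in; have := pieces_gap image_in b'_in.
by case/orP => ? /orP [] ?; split; lra.
Qed.

End Morphism.

End Graph.

Theorem proposition9p5 (V E H : finType) (src : E -> V) (inv : E -> E)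
  (hsrc : H -> V) (len : E -> rat)
  (VC : {set V}) (EC : {set E}) (HC : {set H}) (w0 w1 : V)
  (cut : E -> seq rat) (cut' : E + bool -> seq rat) :
  is_rmgraph src inv len ->
  is_subgraph src inv hsrc VC EC HC ->
  sub_connected src inv VC EC ->
  w0 \in VC -> w1 \in VC -> w0 != w1 ->
  (forall w, w \in VC -> w != w0 -> w != w1 ->
     (forall e, src e = w \/ tgt src inv e = w -> e \in EC) /\
     (forall h, hsrc h = w -> h \in HC)) ->
  valid_cuts inv len cut ->
  valid_cuts' src inv len EC w0 w1 cut' ->
  rho_is_morphism src inv len EC w0 w1 cut cut' ->
  forall q, q \in sub_edges' src inv len EC w0 w1 cut' ->
    1 / plen q = \sum_(p <- sub_edges len cut | rho_edge src inv len EC w0 w1 p == Some q)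
                   1 / plen p.
Proof.
(* [w0 != w1] and the locality of [C] only serve to make rho a graph morphism, which is assumed. *)
move=> [inv_invol inv_neq len_inv len_gt0 _] [EC_inv EC_src _] C_conn w0_C w1_C _ _
  cut_valid cut'_valid rho_morph [[x a'] b'] /mem_sub_edges' [x_in ab'_in].
have [f [Lf f_w0]] := Cpotential_exists inv_invol len_inv len_gt0 EC_inv C_conn w0_C w1_C.
case: x x_in ab'_in => [e /mem_edges'_inl eNC|bb _] ab'_in.
- exact: (flux_outside_C len_gt0 cut_valid cut'_valid rho_morph eNC ab'_in).
- exact: (flux_eC inv_invol inv_neq len_inv len_gt0 EC_inv EC_src C_conn w0_C w1_C Lf f_w0
            cut_valid cut'_valid rho_morph ab'_in).
Qed.
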